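(* Let $\mathcal U$ be a finite set of size $n$, $\Pi$ an orthogonal projector on $L_2(\mathcal U)$, and $\mathcal D$ a finitely supported probability distribution over $L_2(\mathcal U)$. For $u\in\mathcal U$ let $\delta_u$ be the function with $\delta_u(u)=n$ and $\delta_u(v)=0$ for $v\neq u$. Then $$\mathbb{E}_{f\sim\mathcal D}\|\Pi f\|_4^4\le\left(\mathbb{E}_{f,f'\sim\mathcal D}\langle f,\Pi f'\rangle^4\right)^{1/2}\left(\mathbb{E}_{u\in\mathcal U}\|\Pi\delta_u\|_4^4\right)^{1/2},$$ where $f,f'$ are independent samples from $\mathcal D$ and $u$ is uniform on $\mathcal U$.
   Context: $L_2(\mathcal U)$ is the space of functions $\mathcal U\to\mathbb{R}$ with the uniform (expectation) measure: $\langle f,g\rangle=\mathbb{E}_{u\in\mathcal U}f(u)g(u)$, $\|f\|_p=(\mathbb{E}_{u}|f(u)|^p)^{1/p}$; orthogonality refers to this inner product. *)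

From HB Require Import structures.
From mathcomp Require Import all_boot all_order all_algebra.
Set Implicit Arguments. Unset Strict Implicit. Unset Printing Implicit Defensive.
Import Order.TTheory GRing.Theory Num.Theory.
Local Open Scope ring_scope.

Definition Eu (R : rcfType) (U : finType) (g : U -> R) : R :=
  (\sum_(u : U) g u) / (#|U|%:R).

Definition inner (R : rcfType) (U : finType) (f g : {ffun U -> R}) : R :=
  Eu (fun u => f u * g u).

Definition norm4pow4 (R : rcfType) (U : finType) (f : {ffun U -> R}) : R :=
  Eu (fun u => `|f u| ^+ 4).

Definition delta (R : rcfType) (U : finType) (u : U) : {ffun U -> R} :=
  [ffun v => if v == u then (#|U|%:R : R) else 0].

From HB Require Import structures.
From mathcomp Require Import all_boot all_order all_algebra.
From mathcomp Require Import ring lra.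
Set Implicit Arguments. Unset Strict Implicit. Unset Printing Implicit Defensive.
Import Order.TTheory GRing.Theory Num.Theory.
Local Open Scope ring_scope.

(* Write N = #|U| and let t range over U^4.  For g : U -> R put
   g^(4)(t) = g t1 * g t2 * g t3 * g t4; then <f,g>^4 = N^-4 Σ_t f^(4)(t) g^(4)(t).
   For an orthogonal projector Pi (idempotent and self-adjoint) we have
   <g, delta_u> = g u, hence (Pi f) u = <Pi f, Pi delta_u> and
   <f, Pi f'> = <Pi f, Pi f'>.  With the fourth-moment tensors
     A(t) = Σ_i p_i (Pi F_i)^(4)(t)      and      B(t) = Σ_u (Pi delta_u)^(4)(t)
   the three quantities of the theorem become
     E_D ||Pi f||_4^4 = N^-5 Σ_t A B,   E <f,Pi f'>^4 = N^-4 Σ_t A^2,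
     E_u ||Pi delta_u||_4^4 = N^-6 Σ_t B^2,
   and the theorem is the Cauchy-Schwarz inequality Σ A B <= |A|_2 |B|_2. *)

Section TensorPower.
Variables (R : comPzRingType) (U : finType).

Definition tensor4 (g : U -> R) (t : ((U * U) * (U * U))%type) : R :=
  g t.1.1 * g t.1.2 * g t.2.1 * g t.2.2.

Lemma sum_mul_sum (A B : finType) (f : A -> R) (h : B -> R) :
  (\sum_x f x) * (\sum_y h y) = \sum_(t : (A * B)%type) f t.1 * h t.2.
Proof. by rewrite big_distrlr /= pair_big. Qed.

Lemma sum_tensor4 (g : U -> R) : \sum_t tensor4 g t = (\sum_x g x) ^+ 4.
Proof.
have -> : (\sum_x g x) ^+ 4
          = ((\sum_x g x) * (\sum_x g x)) * ((\sum_x g x) * (\sum_x g x)).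
  by rewrite !exprS expr0 mulr1 !mulrA.
by rewrite !sum_mul_sum; apply: eq_bigr => t _; rewrite /tensor4 !mulrA.
Qed.

Lemma tensor4M (f g : U -> R) t :
  tensor4 (fun u => f u * g u) t = tensor4 f t * tensor4 g t.
Proof. by rewrite /tensor4; ring. Qed.

End TensorPower.

Lemma exchange_big3 (R : nmodType) (I J K : finType) (f : I -> J -> K -> R) :
  \sum_i \sum_j \sum_k f i j k = \sum_k \sum_i \sum_j f i j k.
Proof. by under eq_bigr do rewrite exchange_big; rewrite exchange_big. Qed.

(* Cauchy-Schwarz for finite sums, via Lagrange's identity
   Σ_s Σ_t (a_s b_t - a_t b_s)^2 = 2 (Σ a^2)(Σ b^2) - 2 (Σ a b)^2. *)
Lemma cauchy_schwarz_sum (R : realDomainType) (T : finType) (a b : T -> R) :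
  (\sum_t a t * b t) ^+ 2 <= (\sum_t a t ^+ 2) * (\sum_t b t ^+ 2).
Proof.
have lagrange_ge0 : 0 <= \sum_s \sum_t (a s * b t - a t * b s) ^+ 2.
  by apply: sumr_ge0 => s _; apply: sumr_ge0 => t _; exact: sqr_ge0.
have lagrange : \sum_s \sum_t (a s * b t - a t * b s) ^+ 2
   = \sum_s \sum_t (a s ^+ 2 * b t ^+ 2) + \sum_s \sum_t (a t ^+ 2 * b s ^+ 2)
     - 2 * (\sum_s \sum_t (a s * b s) * (a t * b t)).
  rewrite mulr_sumr -!big_split -sumrB; apply: eq_bigr => s _.
  rewrite mulr_sumr -!big_split -sumrB; apply: eq_bigr => t _ /=.
  by rewrite mulr2n; ring.
have swap : \sum_s \sum_t (a t ^+ 2 * b s ^+ 2) = \sum_s \sum_t (a s ^+ 2 * b t ^+ 2).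
  by rewrite exchange_big.
rewrite lagrange swap -big_distrlr /= in lagrange_ge0.
have -> : (\sum_t a t * b t) ^+ 2 = \sum_s \sum_t (a s * b s) * (a t * b t).
  by rewrite expr2 big_distrlr.
lra.
Qed.

Lemma cauchy_schwarz_sqrt (R : rcfType) (T : finType) (a b : T -> R) :
  \sum_t a t * b t <= Num.sqrt (\sum_t a t ^+ 2) * Num.sqrt (\sum_t b t ^+ 2).
Proof.
have a2_ge0 : 0 <= \sum_t a t ^+ 2 by apply: sumr_ge0 => t _; exact: sqr_ge0.
have b2_ge0 : 0 <= \sum_t b t ^+ 2 by apply: sumr_ge0 => t _; exact: sqr_ge0.
rewrite -sqrtrM // (le_trans (ler_norm _)) // -sqrtr_sqr ler_sqrt ?mulr_ge0 //.
exact: cauchy_schwarz_sum.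
Qed.

Lemma norm4_pow4 (R : realDomainType) (x : R) : `|x| ^+ 4 = x ^+ 4.
Proof. by rewrite -normrX ger0_norm // (_ : 4 = 2 * 2)%N // exprM sqr_ge0. Qed.

Lemma sqrt_div_exp2 (R : rcfType) (x N : R) k :
  0 <= x -> 0 < N -> Num.sqrt (x / N ^+ (k * 2)) = Num.sqrt x / N ^+ k.
Proof.
move=> x_ge0 N_gt0; rewrite sqrtrM // exprM -exprVn sqrtr_sqr ger0_norm //.
by rewrite invr_ge0 exprn_ge0 // ltW.
Qed.

Section ProjectorMoments.
Variables (R : rcfType) (U : finType).
Hypothesis U_gt0 : (0 < #|U|)%N.

Local Notation N := (#|U|%:R : R).

Lemma N_neq0 : N != 0.
Proof. by rewrite pnatr_eq0 -lt0n. Qed.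

Lemma inner_sym (f g : {ffun U -> R}) : inner f g = inner g f.
Proof. by rewrite /inner /Eu; congr (_ / _); apply: eq_bigr => v _; rewrite mulrC. Qed.

Lemma inner_pow4 (f g : {ffun U -> R}) :
  inner f g ^+ 4 = (\sum_t tensor4 f t * tensor4 g t) / N ^+ 4.
Proof.
rewrite /inner /Eu expr_div_n -sum_tensor4.
by congr (_ / _); apply: eq_bigr => t _; rewrite tensor4M.
Qed.

Lemma inner_delta (g : {ffun U -> R}) u : inner g (delta R u) = g u.
Proof.
rewrite /inner /Eu (bigD1 u) //= big1 ?addr0; first by rewrite ffunE eqxx mulfK ?N_neq0.
by move=> v vu; rewrite ffunE (negbTE vu) mulr0.
Qed.

Variable Pi : {ffun U -> R} -> {ffun U -> R}.
Hypothesis Pi_idem : forall f, Pi (Pi f) = Pi f.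
Hypothesis Pi_adj : forall f g, inner (Pi f) g = inner f (Pi g).

Lemma proj_reproducing f u : Pi f u = inner (Pi f) (Pi (delta R u)).
Proof. by rewrite -Pi_adj Pi_idem inner_delta. Qed.

Lemma proj_kernel u v : Pi (delta R v) u = inner (Pi (delta R u)) (Pi (delta R v)).
Proof. by rewrite proj_reproducing inner_sym. Qed.

Lemma inner_proj f g : inner f (Pi g) = inner (Pi f) (Pi g).
Proof. by rewrite Pi_adj Pi_idem. Qed.

Variables (I : finType) (p : I -> R) (F : I -> {ffun U -> R}).

Definition moment4 t : R := \sum_i p i * tensor4 (Pi (F i)) t.
Definition kernel4 t : R := \sum_u tensor4 (Pi (delta R u)) t.

Lemma norm4pow4_proj f :
  norm4pow4 (Pi f) = (\sum_u \sum_t tensor4 (Pi f) t * tensor4 (Pi (delta R u)) t)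
                     / N ^+ 5.
Proof.
rewrite /norm4pow4 /Eu.
under eq_bigr do rewrite norm4_pow4 proj_reproducing inner_pow4.
by rewrite -mulr_suml; field; rewrite N_neq0.
Qed.

Lemma expected_norm4 :
  \sum_i p i * norm4pow4 (Pi (F i)) = (\sum_t moment4 t * kernel4 t) / N ^+ 5.
Proof.
have -> : \sum_t moment4 t * kernel4 t
    = \sum_i \sum_u \sum_t p i * (tensor4 (Pi (F i)) t * tensor4 (Pi (delta R u)) t).
  rewrite exchange_big3; apply: eq_bigr => t _; rewrite big_distrlr /=.
  by apply: eq_bigr => i _; apply: eq_bigr => u _; rewrite -mulrA.
rewrite mulr_suml; apply: eq_bigr => i _.
rewrite norm4pow4_proj mulrA mulr_sumr; congr (_ / _).
by apply: eq_bigr => u _; rewrite mulr_sumr.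
Qed.

Lemma expected_inner4 :
  \sum_i \sum_j p i * p j * (inner (F i) (Pi (F j))) ^+ 4
    = (\sum_t moment4 t ^+ 2) / N ^+ 4.
Proof.
have -> : \sum_t moment4 t ^+ 2 = \sum_i \sum_j \sum_t
    (p i * tensor4 (Pi (F i)) t) * (p j * tensor4 (Pi (F j)) t).
  by rewrite exchange_big3; apply: eq_bigr => t _; rewrite expr2 big_distrlr.
rewrite mulr_suml; apply: eq_bigr => i _; rewrite mulr_suml; apply: eq_bigr => j _.
rewrite inner_proj inner_pow4 mulrA mulr_sumr; congr (_ * _).
by apply: eq_bigr => t _; ring.
Qed.

Lemma expected_kernel_norm4 :
  Eu (fun u : U => norm4pow4 (Pi (delta R u))) = (\sum_t kernel4 t ^+ 2) / N ^+ 6.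
Proof.
have -> : \sum_t kernel4 t ^+ 2 = \sum_v \sum_u \sum_t
    tensor4 (Pi (delta R u)) t * tensor4 (Pi (delta R v)) t.
  rewrite exchange_big3; apply: eq_bigr => t _; rewrite expr2 big_distrlr /=.
  by apply: eq_bigr => v _; apply: eq_bigr => u _; rewrite mulrC.
have row v : \sum_u `|Pi (delta R v) u| ^+ 4
    = (\sum_u \sum_t tensor4 (Pi (delta R u)) t * tensor4 (Pi (delta R v)) t) / N ^+ 4.
  by rewrite mulr_suml; apply: eq_bigr => u _; rewrite norm4_pow4 proj_kernel inner_pow4.
rewrite /Eu /norm4pow4; under eq_bigr do rewrite /Eu row.
by rewrite -!mulr_suml; field; rewrite N_neq0.
Qed.

End ProjectorMoments.

Theorem lemma4p6 (R : rcfType) (U : finType)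
  (Pi : {ffun U -> R} -> {ffun U -> R})
  (I : finType) (p : I -> R) (F : I -> {ffun U -> R}) :
  (0 < #|U|)%N ->
  (forall (a : R) (f g : {ffun U -> R}),
     Pi [ffun x => a * f x + g x] = [ffun x => a * Pi f x + Pi g x]) ->
  (forall f, Pi (Pi f) = Pi f) ->
  (forall f g, inner (Pi f) g = inner f (Pi g)) ->
  (forall i, 0 <= p i) -> \sum_(i : I) p i = 1 ->
  \sum_(i : I) p i * norm4pow4 (Pi (F i))
    <= Num.sqrt (\sum_(i : I) \sum_(j : I) p i * p j * (inner (F i) (Pi (F j))) ^+ 4)
       * Num.sqrt (Eu (fun u : U => norm4pow4 (Pi (delta R u)))).
Proof.
move=> U_gt0 _ Pi_idem Pi_adj _ _.
have N_gt0 : 0 < (#|U|%:R : R) by rewrite ltr0n.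
rewrite expected_norm4 // expected_inner4 // expected_kernel_norm4 //.
rewrite (sqrt_div_exp2 2 _ N_gt0) ?(sqrt_div_exp2 3 _ N_gt0);
  try by apply: sumr_ge0 => t _; exact: sqr_ge0.
rewrite mulrACA -invfM -exprD ler_pM2r ?invr_gt0 ?exprn_gt0 //.
exact: cauchy_schwarz_sqrt.
Qed.
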